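(* Let $\alpha\in(0,\pi/2)$ and let $X_0=(0,0),X_1,\dots,X_n$ be points on the $x$-axis, $X_i=(x_i,0)$, none of $X_1,\dots,X_n$ redundant. For $0\le j\le n$ let $T_j$ be the apex of the feasibility cone $\mathrm{FC}(X_0,\dots,X_j)$. Then for every $0\le i\le n$, the polygonal path $T_0,T_1,\dots,T_i$ has total length $\sum_{k=0}^{i-1}|T_kT_{k+1}|$ equal to the distance $|X_iT_i|$ between $(x_i,0)$ and $T_i$.
   Context: For a point $X=(x,0)$ and $\alpha\in(0,\pi/2)$, the feasibility cone is $\mathrm{FC}(X)=\{(u,v): v\ge0,\ |u-x|\le v\tan\alpha\}$; for a finite set of points on the $x$-axis, its feasibility cone is the intersection of their cones. If the points have minimum $x$-coordinate $l$ and maximum $x$-coordinate $m$, this intersection is the cone $\{(u,v): v\ge0,\ l\le u - \ldots\}$ with apex $\left(\frac{l+m}{2},\frac{m-l}{2\tan\alpha}\right)$, i.e. the set of points whose left and right coverage bounds $u\mp v\tan\alpha$ contain $[l,m]$. A point $X_{i+1}=(x_{i+1},0)$ is redundant if $x_{i+1}\in[\min_{j\le i}x_j,\max_{j\le i}x_j]$. *)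

From Stdlib Require Import Reals Lra.
Open Scope R_scope.

Definition point : Type := (R * R)%type.

Definition pdist (P Q : point) : R :=
  sqrt ((fst P - fst Q) ^ 2 + (snd P - snd Q) ^ 2).

Definition FC1 (alpha : R) (x : R) (P : point) : Prop :=
  0 <= snd P /\ Rabs (fst P - x) <= snd P * tan alpha.

Definition FC (alpha : R) (x : nat -> R) (j : nat) (P : point) : Prop :=
  forall k, (k <= j)%nat -> FC1 alpha (x k) P.

Fixpoint minx (x : nat -> R) (j : nat) : R :=
  match j with
  | O => x O
  | S j' => Rmin (minx x j') (x j)
  end.

Fixpoint maxx (x : nat -> R) (j : nat) : R :=
  match j with
  | O => x O
  | S j' => Rmax (maxx x j') (x j)
  end.

Definition apex (alpha : R) (x : nat -> R) (j : nat) : point :=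
  ((minx x j + maxx x j) / 2, (maxx x j - minx x j) / (2 * tan alpha)).

Definition redundant (x : nat -> R) (i : nat) : Prop :=
  minx x i <= x (S i) <= maxx x i.

Fixpoint path_length (T : nat -> point) (i : nat) : R :=
  match i with
  | O => 0
  | S i' => path_length T i' + pdist (T i') (T i)
  end.

(* Widening the hull [l, m] of the points by u moves the apex ((l+m)/2, (m-l)/(2 tan a))
   by u/2 horizontally and u/(2 tan a) vertically, i.e. by a distance proportional to u.
   A non-redundant point always widens the hull on one side, so the path T_0 ... T_i has
   length proportional to the final width m - l; and since X_i is then an endpoint of
   the hull, |X_i T_i| is the same multiple of m - l. *)
From Stdlib Require Import Reals Lra Lia.
Open Scope R_scope.

Definition slant (t : R) : R := sqrt (/ 4 + / (4 * t ^ 2)).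

Definition width (x : nat -> R) (j : nat) : R := maxx x j - minx x j.

Lemma pdist_slant (t u : R) (P Q : point) : t <> 0 ->
  (fst P - fst Q) ^ 2 = (u / 2) ^ 2 ->
  (snd P - snd Q) ^ 2 = (u / (2 * t)) ^ 2 ->
  pdist P Q = Rabs u * slant t.
Proof.
  intros Ht Hfst Hsnd.
  unfold pdist, slant; rewrite Hfst, Hsnd.
  replace ((u / 2) ^ 2 + (u / (2 * t)) ^ 2)
    with (Rabs u ^ 2 * (/ 4 + / (4 * t ^ 2))) by (rewrite pow2_abs; field; auto).
  rewrite sqrt_mult_alt by apply pow2_ge_0.
  now rewrite sqrt_pow2 by apply Rabs_pos.
Qed.

Lemma minx_le_maxx (x : nat -> R) (j : nat) : minx x j <= maxx x j.
Proof.
  induction j as [|j IH]; simpl; [lra|].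
  unfold Rmin, Rmax; repeat destruct Rle_dec; lra.
Qed.

Lemma width_ge0 (x : nat -> R) (j : nat) : 0 <= width x j.
Proof. unfold width; pose proof (minx_le_maxx x j); lra. Qed.

Lemma nonredundant_extends (x : nat -> R) (k : nat) : ~ redundant x k ->
  (x (S k) < minx x k /\ minx x (S k) = x (S k) /\ maxx x (S k) = maxx x k) \/
  (maxx x k < x (S k) /\ maxx x (S k) = x (S k) /\ minx x (S k) = minx x k).
Proof.
  unfold redundant; intros Hnr; pose proof (minx_le_maxx x k); simpl.
  destruct (Rlt_dec (x (S k)) (minx x k)) as [Hlt | Hge].
  - left; rewrite Rmin_right, Rmax_left; lra.
  - right; rewrite Rmin_left, Rmax_right; lra.
Qed.

Section Apex.

Variables (alpha : R) (x : nat -> R).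
Hypothesis tan_neq0 : tan alpha <> 0.

Lemma pdist_apex_step (k : nat) : ~ redundant x k ->
  pdist (apex alpha x k) (apex alpha x (S k)) = (width x (S k) - width x k) * slant (tan alpha).
Proof.
  intros Hnr; unfold width, apex.
  destruct (nonredundant_extends x k Hnr) as [(Hlt & -> & ->) | (Hgt & -> & ->)].
  - rewrite (pdist_slant (tan alpha) (x (S k) - minx x k)) by (auto; simpl; field; auto).
    rewrite Rabs_left by lra; ring.
  - rewrite (pdist_slant (tan alpha) (x (S k) - maxx x k)) by (auto; simpl; field; auto).
    rewrite Rabs_right by lra; ring.
Qed.

Lemma pdist_endpoint_apex (j : nat) : x j = minx x j \/ x j = maxx x j ->
  pdist (x j, 0) (apex alpha x j) = width x j * slant (tan alpha).
Proof.
  intros Hend; pose proof (width_ge0 x j) as Hw; unfold width, apex in *.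
  destruct Hend as [Eend | Eend]; rewrite Eend;
    rewrite (pdist_slant (tan alpha) (maxx x j - minx x j)) by (auto; simpl; field; auto);
    rewrite Rabs_right by lra; ring.
Qed.

Variable n : nat.
Hypothesis nonredundant : forall i : nat, (i < n)%nat -> ~ redundant x i.

Lemma path_length_apex (i : nat) : (i <= n)%nat ->
  path_length (apex alpha x) i = width x i * slant (tan alpha).
Proof.
  induction i as [|k IH]; intros Hi; simpl path_length.
  - unfold width; simpl; ring.
  - rewrite IH, pdist_apex_step by (auto; lia); ring.
Qed.

Lemma nonredundant_endpoint (i : nat) : (i <= n)%nat -> x i = minx x i \/ x i = maxx x i.
Proof.
  destruct i as [|k]; intros Hi; [now left|].
  destruct (nonredundant_extends x k (nonredundant k ltac:(lia))) as [(_ & -> & _) | (_ & -> & _)];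
    auto.
Qed.

End Apex.

Theorem lemma1 (alpha : R) (n : nat) (x : nat -> R) :
  0 < alpha < PI / 2 ->
  x 0%nat = 0 ->
  (forall i : nat, (i < n)%nat -> ~ redundant x i) ->
  forall i : nat, (i <= n)%nat ->
    path_length (apex alpha x) i = pdist (x i, 0) (apex alpha x i).
Proof.
  intros Halpha _ Hnr i Hi.
  assert (Htan : tan alpha <> 0) by (apply Rgt_not_eq, tan_gt_0; lra).
  rewrite (path_length_apex alpha x Htan n Hnr i Hi).
  now rewrite (pdist_endpoint_apex alpha x Htan i (nonredundant_endpoint x n Hnr i Hi)).
Qed.
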